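(* Let $d\ge 1$, $\kappa>0$, and let $\bm{x}_1,\dots,\bm{x}_{l+m}\in\mathcal{H}_d$, where the first $l$ points are designated as landmarks and the remaining $m$ as non-landmarks. Assume the landmarks $\bm{x}_1,\dots,\bm{x}_l$ are not all contained in a single hyperplane of $\mathcal{H}_d$ (i.e., they are not all contained in a $d$-dimensional linear subspace of $\mathbb{R}^{d+1}$; in particular $l\ge d+1$). Let $D=[d_{ij}]$ with $d_{ij}=\mathrm{d}^\kappa_H(\bm{x}_i,\bm{x}_j)$, partitioned as $D=\begin{psmallmatrix} D_L & D_N^\top\\ D_N & D_R\end{psmallmatrix}$ with $D_L\in\mathbb{R}^{l\times l}$ (landmark–landmark distances) and $D_N\in\mathbb{R}^{m\times l}$ (non-landmark–landmark distances). Then the algorithm L-hydra$(D_L,D_N,d,\kappa)$ does not return Null, and the rows $\hat{\bm{x}}_1,\dots,\hat{\bm{x}}_{l+m}$ of the returned matrix $\hat X=\begin{psmallmatrix}\hat X_L\\ \hat X_N\end{psmallmatrix}$ are points of $\mathcal{H}_d$ satisfying $$\mathrm{d}^\kappa_H(\hat{\bm{x}}_i,\hat{\bm{x}}_j)=\mathrm{d}^\kappa_H(\bm{x}_i,\bm{x}_j)\quad\text{for all } i,j=1,\dots,l+m.$$ In fact there is a positive Lorentz matrix $T$ with $\hat X = XT$, where $X$ is the matrix with rows $\bm{x}_1^\top,\dots,\bm{x}_{l+m}^\top$.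
   Context: Lorentz product on $\mathbb{R}^{d+1}$: $\bm{x}\circ\bm{y} = x_1y_1 - (x_2y_2+\dots+x_{d+1}y_{d+1})$. $J=\operatorname{diag}(1,-1,\dots,-1)\in\mathbb{R}^{(d+1)\times(d+1)}$. Hyperboloid: $\mathcal{H}_d=\{\bm{x}\in\mathbb{R}^{d+1}: \bm{x}\circ\bm{x}=1,\ x_1>0\}$. For $\kappa>0$: $\mathrm{d}^\kappa_H(\bm{x},\bm{y})=\frac{1}{\sqrt{\kappa}}\operatorname{arcosh}(\bm{x}\circ\bm{y})$. A positive Lorentz matrix is an invertible $T$ with $T_{11}>0$ and $T^\top JT=TJT^\top=J$. Algorithm L-hydra$(D_L,D_N,d,\kappa)$: input a symmetric $D_L\in\mathbb{R}_{\ge0}^{l\times l}$ with zero diagonal, $D_N\in\mathbb{R}_{\ge 0}^{m\times l}$, an integer $d\ge1$ and $\kappa>0$. Step 1: set $A_L=\cosh(\sqrt{\kappa}D_L)$, $A_N=\cosh(\sqrt{\kappa}D_N)$ (cosh applied entrywise) and take an eigendecomposition $A_L=Q\Lambda Q^\top$ with $Q$ orthogonal, columns $\bm{q}_1,\dots,\bm{q}_l$, and $\Lambda=\operatorname{diag}(\lambda_1,\dots,\lambda_l)$, $\lambda_1\ge\dots\ge\lambda_l$; the sign of $\bm{q}_1$ is chosen so that its entries are positive (Perron vector). Step 2: if $\lambda_{l-d+1},\dots,\lambda_l$ are not all strictly negative (or $l<d+1$), return Null; otherwise set $\hat X_L=\big[\sqrt{\lambda_1}\bm{q}_1,\ \sqrt{-\lambda_{l-d+1}}\bm{q}_{l-d+1},\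 \dots,\ \sqrt{-\lambda_l}\bm{q}_l\big]\in\mathbb{R}^{l\times(d+1)}$. Step 3: set $\hat X_N=A_N\big[\bm{q}_1/\sqrt{\lambda_1},\ -\bm{q}_{l-d+1}/\sqrt{-\lambda_{l-d+1}},\ \dots,\ -\bm{q}_l/\sqrt{-\lambda_l}\big]\in\mathbb{R}^{m\times(d+1)}$. Return $\hat X=\begin{psmallmatrix}\hat X_L\\ \hat X_N\end{psmallmatrix}$. *)

From HB Require Import structures.
From mathcomp Require Import all_boot all_order all_algebra.
From mathcomp Require Import reals.
From mathcomp.analysis Require Import sequences exp.
Set Implicit Arguments. Unset Strict Implicit. Unset Printing Implicit Defensive.
Import Order.TTheory GRing.Theory Num.Theory.
Local Open Scope ring_scope.

Section LHydra.
Variable R : realType.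

Definition cosh (t : R) : R := (expR t + expR (- t)) / 2.
Definition arcosh (y : R) : R := ln (y + Num.sqrt (y ^+ 2 - 1)).

(* Lorentz product x o y = x_1 y_1 - (x_2 y_2 + ... + x_{d+1} y_{d+1}),
   with coordinates indexed 0..d (coordinate 1 of the paper is index 0). *)
Definition lorentz (n : nat) (x y : 'rV[R]_n.+1) : R :=
  x 0 0 * y 0 0 - \sum_(i < n.+1 | i != 0) x 0 i * y 0 i.

Definition Jmx (n : nat) : 'M[R]_n.+1 :=
  diag_mx (\row_(i < n.+1) (if i == 0 then 1 else -1)).

Definition in_hyperboloid (n : nat) (x : 'rV[R]_n.+1) : Prop :=
  lorentz x x = 1 /\ 0 < x 0 0.

Definition dH (kappa : R) (n : nat) (x y : 'rV[R]_n.+1) : R :=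
  (Num.sqrt kappa)^-1 * arcosh (lorentz x y).

Definition positive_lorentz (n : nat) (T : 'M[R]_n.+1) : Prop :=
  T \in unitmx /\ 0 < T 0 0 /\
  T^T *m Jmx n *m T = Jmx n /\ T *m Jmx n *m T^T = Jmx n.

Definition dist_matrix (kappa : R) (N n : nat) (X : 'M[R]_(N, n.+1)) : 'M[R]_N :=
  \matrix_(i, j) dH kappa (row i X) (row j X).

Definition cosh_mx (kappa : R) (p q : nat) (M : 'M[R]_(p, q)) : 'M[R]_(p, q) :=
  map_mx (fun t => cosh (Num.sqrt kappa * t)) M.

(* Step 1: (Q, lam) is an admissible eigendecomposition A_L = Q diag(lam) Q^T
   with Q orthogonal, eigenvalues in non-increasing order, and the first
   column q_1 (Perron vector) with positive entries. *)
Definition Lhydra_eig (kappa : R) (l : nat) (DL : 'M[R]_l)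
    (Q : 'M[R]_l) (lam : 'rV[R]_l) : Prop :=
  Q *m Q^T = 1%:M /\
  cosh_mx kappa DL = Q *m diag_mx lam *m Q^T /\
  (forall i j : 'I_l, (i <= j)%N -> lam 0 j <= lam 0 i) /\
  (forall i j : 'I_l, val j = 0%N -> 0 < Q i j).

(* 0-based index (into 1..l columns) of the k-th selected column:
   k = 0 -> q_1 ; k = 1..d -> q_{l-d+k} (0-based l-d-1+k) *)
Definition sel_idx (l d : nat) (k : 'I_d.+1) : nat :=
  if val k == 0%N then 0%N else (l - d.+1 + k)%N.

(* selection matrix: (Q *m sel_mx) has columns q_1, q_{l-d+1}, ..., q_l *)
Definition sel_mx (l d : nat) : 'M[R]_(l, d.+1) :=
  \matrix_(j, k) (if val j == @sel_idx l d k then 1 else 0).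

Definition sgn_col (d : nat) (k : 'I_d.+1) : R := if val k == 0%N then 1 else -1.

(* Algorithm L-hydra, run with a given admissible eigendecomposition (Q, lam). *)
Definition Lhydra (l m : nat) (DL : 'M[R]_l) (DN : 'M[R]_(m, l)) (d : nat)
    (kappa : R) (Q : 'M[R]_l) (lam : 'rV[R]_l) : option 'M[R]_(l + m, d.+1) :=
  let QS := Q *m sel_mx l d in
  let mu := lam *m sel_mx l d in
  if (l < d.+1)%N then None
  else if ~~ [forall k : 'I_d.+1, (val k != 0%N) ==> (mu 0 k < 0)] then None
  else
    let XL := \matrix_(i < l, k < d.+1) (QS i k * Num.sqrt (sgn_col k * mu 0 k)) in
    let XN := cosh_mx kappa DN *m
                \matrix_(j < l, k < d.+1) (sgn_col k * QS j k / Num.sqrt (sgn_col k * mu 0 k)) in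
    Some (col_mx XL XN).

End LHydra.

From HB Require Import structures.
From mathcomp Require Import all_boot all_order all_algebra.
From mathcomp Require Import reals.
From mathcomp.analysis Require Import exp.
From mathcomp Require Import ring lra zify.
Import Order.TTheory GRing.Theory Num.Theory.
Local Open Scope ring_scope.
Set Implicit Arguments. Unset Strict Implicit. Unset Printing Implicit Defensive.

(* With J = diag(1,-1,...,-1), the matrix A_L = cosh(sqrt kappa D_L) is the Lorentz
   Gram matrix X_L J X_L^T.  Writing A_L = Q Lambda Q^T, Lambda is the Gram matrix of
   the rows of Q^T X_L, which has rank d+1; so Lambda has exactly d+1 nonzero entries,
   and at most one positive one because no two timelike vectors are Lorentz-orthogonal.
   Since (A_L)_11 = 1, the largest eigenvalue lambda_1 is positive, hence the d negative
   eigenvalues are the last d ones and all the others vanish.  Then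
   T = J X_L^T Q_S diag(+-|mu|^(-1/2)) satisfies X_L T = Xhat_L and X_N T = Xhat_N, and
   X_L (T J T^T) X_L^T = Xhat_L J Xhat_L^T = A_L = X_L J X_L^T gives T J T^T = J because
   X_L has full column rank.  Finally the Perron vector makes the first coordinate of
   x_1 T positive, so T preserves the upper sheet of the hyperboloid. *)

Lemma card_ord_geq l j : #|[set i : 'I_l | (j <= i)%N]| = (l - j)%N.
Proof.
rewrite -sum1_card (eq_bigl (fun i : 'I_l => xpredT i && (j <= i)%N)) => [|i]; last first.
  by rewrite inE.
by rewrite -(big_geq_mkord j l xpredT (fun=> 1%N)) sum_nat_const_nat muln1.
Qed.

Lemma mxrank_diag (F : fieldType) n (v : 'rV[F]_n) :
  \rank (diag_mx v) = #|[set i | v 0 i != 0]|.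
Proof.
set S := [set i | v 0 i != 0].
pose f (j : 'I_#|S|) : 'I_n := enum_val j.
have f_inj : injective f by exact: enum_val_inj.
pose E : 'M[F]_(#|S|, n) := \matrix_(j, i) (i == f j)%:R.
pose w := \row_j v 0 (f j).
have wE : E *m diag_mx v *m E^T = diag_mx w.
  apply/matrixP => a b; rewrite mul_mx_diag !mxE (bigD1 (f a)) //= big1 => [|i /negbTE hi].
    by rewrite !mxE eqxx (inj_eq f_inj) mul1r addr0 mulr_natr.
  by rewrite !mxE hi !mul0r.
have vE : E^T *m diag_mx w *m E = diag_mx v.
  apply/matrixP => i i'; rewrite mul_mx_diag !mxE.
  have [iS|iNS] := boolP (i \in S); last first.
    move: (iNS); rewrite inE negbK => /eqP ->; rewrite mul0rn big1 // => j _.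
    by rewrite !mxE; case: eqP => [ij|]; rewrite ?mul0r //; move: iNS; rewrite ij enum_valP.
  have fi : f (enum_rank_in iS i) = i by rewrite /f enum_rankK_in.
  rewrite (bigD1 (enum_rank_in iS i)) //= big1 => [|j hj].
    by rewrite !mxE fi eqxx mul1r addr0 [i' == i]eq_sym mulr_natr.
  rewrite !mxE; case: eqP => [ij|]; last by rewrite !mul0r.
  by move: hj; rewrite -fi in ij; rewrite (f_inj _ _ ij) eqxx.
have wu : diag_mx w \in unitmx.
  rewrite unitmxE det_diag unitfE; apply/prodf_neq0 => j _.
  by rewrite mxE; move: (enum_valP j); rewrite inE.
apply/eqP; rewrite eqn_leq; apply/andP; split.
  rewrite -vE (leq_trans (mxrankM_maxl _ _)) // (leq_trans (mxrankM_maxr _ _)) //.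
  exact: rank_leq_col.
rewrite -{1}(mxrank_unit wu) -wE.
exact: leq_trans (mxrankM_maxl _ _) (mxrankM_maxr _ _).
Qed.

Lemma row_full_form_inj (F : fieldType) p n (A : 'M[F]_(p, n)) (U V : 'M[F]_n) :
  row_full A -> A *m U *m A^T = A *m V *m A^T -> U = V.
Proof.
case/row_fullP => B BA /(congr1 (fun Z => B *m Z *m B^T)).
by rewrite !mulmxA BA !mul1mx -!mulmxA -trmx_mul BA trmx1 !mulmx1.
Qed.

Section LorentzGeometry.
Variable R : realType.
Implicit Types (n : nat).

Definition space_dot n (x y : 'rV[R]_n.+1) : R :=
  \sum_(i < n.+1 | i != 0) x 0 i * y 0 i.

Lemma lorentz_space n (x y : 'rV[R]_n.+1) :
  lorentz x y = x 0 0 * y 0 0 - space_dot x y.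
Proof. by []. Qed.

Lemma space_dot_ge0 n (x : 'rV[R]_n.+1) : 0 <= space_dot x x.
Proof. by apply: sumr_ge0 => i _; rewrite -expr2 sqr_ge0. Qed.

(* Lagrange's identity: the left side is the spatial squared norm of y_0 x - x_0 y. *)
Lemma space_dot_quad_ge0 n (x y : 'rV[R]_n.+1) :
  0 <= y 0 0 ^+ 2 * space_dot x x - 2 * x 0 0 * y 0 0 * space_dot x y
       + x 0 0 ^+ 2 * space_dot y y.
Proof.
suff -> : y 0 0 ^+ 2 * space_dot x x - 2 * x 0 0 * y 0 0 * space_dot x y
       + x 0 0 ^+ 2 * space_dot y y
   = \sum_(i < n.+1 | i != 0) (x 0 i * y 0 0 - y 0 i * x 0 0) ^+ 2.
  by apply: sumr_ge0 => i _; rewrite sqr_ge0.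
rewrite /space_dot !mulr_sumr -sumrB -big_split /=; apply: eq_bigr => i _; ring.
Qed.

Lemma lorentzC n (x y : 'rV[R]_n.+1) : lorentz x y = lorentz y x.
Proof. by rewrite /lorentz mulrC; congr (_ - _); apply: eq_bigr => i _; exact: mulrC. Qed.

Lemma lorentzN n (x y : 'rV[R]_n.+1) : lorentz x (- y) = - lorentz x y.
Proof.
rewrite /lorentz; under eq_bigr => i _ do rewrite mxE mulrN.
by rewrite sumrN mxE; ring.
Qed.

Lemma hyperboloid_lorentz_ge1 n (x y : 'rV[R]_n.+1) :
  in_hyperboloid x -> in_hyperboloid y -> 1 <= lorentz x y.
Proof.
rewrite /in_hyperboloid !lorentz_space => -[hx x0] [hy y0].
have := space_dot_quad_ge0 x y; have := space_dot_ge0 x; have := space_dot_ge0 y.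
move: hx hy x0 y0; set a := space_dot x x; set b := space_dot y y.
set s := space_dot x y; set p := x 0 0; set q := y 0 0 => hx hy p0 q0 b0 a0 K.
have pq0 : 0 < p * q by rewrite mulr_gt0.
have pq2 : (p * q) ^+ 2 = (1 + a) * (1 + b) by rewrite exprMn; nra.
have pq_le : 2 * (p * q) <= 2 + a + b.
  have : 0 <= (2 + a + b - 2 * (p * q)) * (2 + a + b + 2 * (p * q)).
    suff -> : (2 + a + b - 2 * (p * q)) * (2 + a + b + 2 * (p * q)) = (a - b) ^+ 2.
      exact: sqr_ge0.
    by rewrite -[LHS]subr_sqr exprMn pq2; ring.
  rewrite pmulr_lge0; lra.
have : 0 <= 2 * (p * q) * (p * q - s - 1) by nra.
rewrite pmulr_rge0; lra.
Qed.

Lemma timelike_lorentz_neq0 n (u v : 'rV[R]_n.+1) :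
  0 < lorentz u u -> 0 < lorentz v v -> lorentz u v != 0.
Proof.
rewrite !lorentz_space => hu hv; apply/eqP => huv.
have := space_dot_quad_ge0 u v; have := space_dot_ge0 u; have := space_dot_ge0 v.
have -> : space_dot u v = u 0 0 * v 0 0 by lra.
nra.
Qed.

Lemma lorentz1_hyperboloidN n (y : 'rV[R]_n.+1) :
  lorentz y y = 1 -> y 0 0 <= 0 -> in_hyperboloid (- y).
Proof.
move=> hy y0; split; first by rewrite lorentzN lorentzC lorentzN opprK.
rewrite mxE oppr_gt0 lt_neqAle y0 andbT; apply/eqP => y00.
by move: hy; rewrite lorentz_space y00 mul0r sub0r; have := space_dot_ge0 y; lra.
Qed.

Lemma cosh_arcosh (t : R) : 1 <= t -> cosh (arcosh t) = t.
Proof.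
move=> t1; rewrite /cosh /arcosh; set s := Num.sqrt _.
have s2 : s ^+ 2 = t ^+ 2 - 1 by rewrite sqr_sqrtr // subr_ge0; nra.
have s0 : 0 <= s by rewrite sqrtr_ge0.
rewrite expRN lnK ?posrE; last lra.
have -> : (t + s)^-1 = t - s.
  by apply: (@mulfI _ (t + s)); [rewrite gt_eqF //; lra | rewrite divff ?gt_eqF; nra].
lra.
Qed.

Lemma cosh_dH kappa n (x y : 'rV[R]_n.+1) : 0 < kappa ->
  in_hyperboloid x -> in_hyperboloid y ->
  cosh (Num.sqrt kappa * dH kappa x y) = lorentz x y.
Proof.
move=> k0 hx hy; rewrite /dH mulrA mulfV ?gt_eqF ?sqrtr_gt0 // mul1r.
exact/cosh_arcosh/hyperboloid_lorentz_ge1.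
Qed.

End LorentzGeometry.

Section LorentzMatrices.
Variable R : realType.

Lemma trmx_Jmx n : (Jmx R n)^T = Jmx R n.
Proof. exact: tr_diag_mx. Qed.

Lemma mulJmx n : Jmx R n *m Jmx R n = 1%:M.
Proof.
rewrite /Jmx mulmx_diag; apply/matrixP => i j; rewrite !mxE.
by case: (i == 0); rewrite ?mulr1 ?mulrNN ?mulr1.
Qed.

Lemma lorentz_gramE p q n (A : 'M[R]_(p, n.+1)) (C : 'M[R]_(q, n.+1)) i j :
  (A *m Jmx R n *m C^T) i j = lorentz (row i A) (row j C).
Proof.
rewrite /lorentz /Jmx mul_mx_diag mxE (bigD1 ord0) //= -sumrN; congr (_ + _).
  by rewrite !mxE eqxx mulr1.
by apply: eq_bigr => k /negbTE k0; rewrite !mxE k0 mulrN1 mulNr.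
Qed.

Lemma lorentzE n (x y : 'rV[R]_n.+1) : lorentz x y = (x *m Jmx R n *m y^T) 0 0.
Proof. by rewrite lorentz_gramE !row_id. Qed.

Lemma lorentz_mulmx n (T : 'M[R]_n.+1) (x y : 'rV[R]_n.+1) :
  T *m Jmx R n *m T^T = Jmx R n -> lorentz (x *m T) (y *m T) = lorentz x y.
Proof. by move=> hT; rewrite !lorentzE trmx_mul !mulmxA -(mulmxA x) -(mulmxA x) hT. Qed.

Lemma lorentz_mx_trC n (T : 'M[R]_n.+1) :
  T *m Jmx R n *m T^T = Jmx R n -> T \in unitmx /\ T^T *m Jmx R n *m T = Jmx R n.
Proof.
move=> hT; have TV : T *m (Jmx R n *m T^T *m Jmx R n) = 1%:M by rewrite !mulmxA hT mulJmx.
split; first by case: (mulmx1_unit TV).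
have := mulmx1C TV; rewrite -!mulmxA => VT.
by rewrite -[LHS]mul1mx -(mulJmx n) -mulmxA VT mulmx1.
Qed.

Definition Jcol0 n (T : 'M[R]_n.+1) : 'rV[R]_n.+1 := (col 0 T)^T *m Jmx R n.

Lemma mulmx_coord0 n (T : 'M[R]_n.+1) (x : 'rV[R]_n.+1) :
  (x *m T) 0 0 = lorentz x (Jcol0 T).
Proof.
rewrite lorentzE /Jcol0 trmx_mul trmxK trmx_Jmx mulmxA -(mulmxA x) mulJmx mulmx1.
by rewrite !mxE; apply: eq_bigr => k _; rewrite !mxE.
Qed.

Lemma Jcol0_coord0 n (T : 'M[R]_n.+1) : Jcol0 T 0 0 = T 0 0.
Proof. by rewrite /Jcol0 /Jmx mul_mx_diag !mxE eqxx mulr1. Qed.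

Lemma lorentz_Jcol0 n (T : 'M[R]_n.+1) :
  T^T *m Jmx R n *m T = Jmx R n -> lorentz (Jcol0 T) (Jcol0 T) = 1.
Proof.
move=> hT; rewrite lorentzE /Jcol0 trmx_mul trmxK trmx_Jmx !mulmxA.
rewrite -(mulmxA _ (Jmx R n) (Jmx R n)) mulJmx mulmx1 -{2}(trmxK (col 0 T)) tr_col.
by rewrite -lorentzE -lorentz_gramE trmxK hT /Jmx !mxE.
Qed.

Lemma positive_lorentzP n (T : 'M[R]_n.+1) (x : 'rV[R]_n.+1) :
  T *m Jmx R n *m T^T = Jmx R n -> in_hyperboloid x -> 0 < (x *m T) 0 0 ->
  positive_lorentz T.
Proof.
move=> hT hx xT0; have [Tu hT'] := lorentz_mx_trC hT.
do !split => //; rewrite -Jcol0_coord0 ltNge; apply/negP => y0.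
have := hyperboloid_lorentz_ge1 hx (lorentz1_hyperboloidN (lorentz_Jcol0 hT') y0).
by rewrite lorentzN -mulmx_coord0; lra.
Qed.

Lemma positive_lorentz_hyperboloid n (T : 'M[R]_n.+1) (x : 'rV[R]_n.+1) :
  positive_lorentz T -> in_hyperboloid x -> in_hyperboloid (x *m T).
Proof.
move=> [_ [T0 [hT' hT]]] [hx x0]; split; first by rewrite lorentz_mulmx.
have yH : in_hyperboloid (Jcol0 T) by split; rewrite ?lorentz_Jcol0 ?Jcol0_coord0.
by rewrite mulmx_coord0; apply: lt_le_trans ltr01 (hyperboloid_lorentz_ge1 _ yH).
Qed.

End LorentzMatrices.

Section Selection.
Variables (R : realType) (l d : nat).
Hypothesis hl : (d.+1 <= l)%N.

Lemma sel_idx_lt (k : 'I_d.+1) : (sel_idx l k < l)%N.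
Proof. by rewrite /sel_idx; case: eqP => _; have := ltn_ord k; lia. Qed.

Definition sel_ord (k : 'I_d.+1) : 'I_l := Ordinal (sel_idx_lt k).

Lemma sel_ord_inj : injective sel_ord.
Proof.
move=> k k' /(congr1 val) /=; rewrite /sel_idx.
by case: eqP => hk; case: eqP => hk' e; apply/val_inj => /=; rewrite ?hk ?hk'; lia.
Qed.

Lemma sel_mxE p (A : 'M[R]_(p, l)) i k : (A *m sel_mx R l d) i k = A i (sel_ord k).
Proof.
rewrite mxE (bigD1 (sel_ord k)) //= big1 ?addr0; first by rewrite mxE eqxx mulr1.
move=> j hj; rewrite mxE ifF ?mulr0 //; apply: contraNF hj => /eqP e.
exact/eqP/val_inj.
Qed.

Lemma mul_diag_sel_mx (lam : 'rV[R]_l) :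
  diag_mx lam *m sel_mx R l d = sel_mx R l d *m diag_mx (lam *m sel_mx R l d).
Proof.
apply/matrixP => j k; rewrite mul_diag_mx mul_mx_diag [RHS]mxE sel_mxE !mxE.
by case: eqP => e; rewrite ?mulr0 ?mul0r // mulr1 mul1r; congr (lam 0 _); apply/val_inj.
Qed.

Lemma diag_mx_sel_proj (lam : 'rV[R]_l) :
  (forall i, lam 0 i != 0 -> exists k, sel_ord k = i) ->
  diag_mx lam *m (sel_mx R l d *m (sel_mx R l d)^T) = diag_mx lam.
Proof.
move=> hsel; apply/matrixP => i j; rewrite mul_diag_mx !mxE.
have [->|/hsel[k <-]] := eqVneq (lam 0 i) 0; first by rewrite !mul0r mul0rn.
rewrite (bigD1 k) //= big1 => [|k' hk']; last first.
  rewrite !mxE ifF ?mul0r //; apply: contraNF hk' => /eqP e.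
  by apply/eqP/sel_ord_inj/val_inj.
rewrite !mxE eqxx addr0 mul1r -(inj_eq val_inj) eq_sym.
by case: eqP; rewrite ?mulr1 ?mulr0.
Qed.

End Selection.

Lemma sorted_signature (R : realDomainType) l d (lam : 'rV[R]_l) (i0 : 'I_l) :
  (forall i j : 'I_l, (i <= j)%N -> lam 0 j <= lam 0 i) ->
  #|[set i | lam 0 i != 0]| = d.+1 ->
  0 < lam 0 i0 -> (forall i, 0 < lam 0 i -> i = i0) ->
  (forall j : 'I_l, (l - d <= j)%N -> lam 0 j < 0) /\
  (forall i : 'I_l, i != i0 -> (i < l - d)%N -> lam 0 i = 0).
Proof.
move=> sorted_lam card_nz pos_i0 pos_uniq.
set N := [set i | lam 0 i < 0].
have card_neg : #|N| = d.
  have nzE : [set i | lam 0 i != 0] = i0 |: N.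
    apply/setP => i; rewrite !inE; case: (ltgtP (lam 0 i) 0) => [h|h|h].
    - by rewrite orbT.
    - by rewrite (pos_uniq _ h) eqxx.
    by rewrite orbF; apply/esym/eqP => ii0; move: pos_i0; rewrite -ii0 h ltxx.
  by apply/eqP; rewrite -eqSS -card_nz nzE cardsU1 inE ltNge ltW.
split=> [j hj|i hi0 hi].
  rewrite ltNge; apply/negP => hj0.
  have : N \subset [set i : 'I_l | (j.+1 <= i)%N].
    apply/subsetP => i; rewrite !inE ltnNge; apply: contraTN => /sorted_lam; lra.
  by move/subset_leq_card; rewrite card_neg card_ord_geq; have := ltn_ord j; lia.
case: (ltgtP (lam 0 i) 0) => [h|h|//]; last by move: hi0; rewrite (pos_uniq _ h) eqxx.
have : [set j : 'I_l | (i <= j)%N] \subset N.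
  by apply/subsetP => j; rewrite !inE => /sorted_lam; lra.
by move/subset_leq_card; rewrite card_neg card_ord_geq; lia.
Qed.

Lemma lorentz_gram_signature (R : realType) l d (M : 'M[R]_(l, d.+1))
    (lam : 'rV[R]_l) (i0 : 'I_l) :
  diag_mx lam = M *m Jmx R d *m M^T -> \rank M = d.+1 ->
  (forall i j : 'I_l, (i <= j)%N -> lam 0 j <= lam 0 i) -> 0 < lam 0 i0 ->
  (forall j : 'I_l, (l - d <= j)%N -> lam 0 j < 0) /\
  (forall i : 'I_l, i != i0 -> (i < l - d)%N -> lam 0 i = 0).
Proof.
move=> gramM rankM sorted_lam pos_i0; apply: sorted_signature => //.
  have J_free : row_free (Jmx R d) by rewrite row_free_unit; case: (mulmx1_unit (mulJmx R d)).
  rewrite -mxrank_diag gramM mxrankMfree ?mxrankMfree //.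
  by rewrite /row_free mxrank_tr rankM.
have gramE i j : lorentz (row i M) (row j M) = lam 0 i *+ (i == j).
  by rewrite -lorentz_gramE -gramM mxE.
move=> i pos_i; apply/eqP; apply: contraT => ne.
have := timelike_lorentz_neq0 (u := row i M) (v := row i0 M).
by rewrite !gramE !eqxx (negbTE ne) eqxx => /(_ pos_i pos_i0).
Qed.

Lemma sgn_colM (R : realType) d (k : 'I_d.+1) : sgn_col R k * sgn_col R k = 1.
Proof. by rewrite /sgn_col; case: (val k == 0%N); rewrite ?mulrNN mulr1. Qed.

Lemma Jmx_sgn (R : realType) d : Jmx R d = diag_mx (\row_k sgn_col R k).
Proof. by []. Qed.

Section LhydraCorrectness.
Variables (R : realType) (d l m : nat) (kappa : R) (X : 'M[R]_(l + m, d.+1)).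
Variables (Q : 'M[R]_l) (lam : 'rV[R]_l).
Hypotheses (kappa_gt0 : 0 < kappa) (X_hyp : forall i, in_hyperboloid (row i X)).
Hypothesis XL_full : row_full (usubmx X).
Hypothesis eigQ : Lhydra_eig kappa (ulsubmx (dist_matrix kappa X)) Q lam.

Local Notation J := (Jmx R d).
Local Notation XL := (usubmx X).
Local Notation XN := (dsubmx X).
Local Notation D := (dist_matrix kappa X).
Local Notation S := (sel_mx R l d).
Local Notation mu := (lam *m sel_mx R l d).

Lemma cosh_landmarksE :
  cosh_mx kappa (ulsubmx D) = XL *m J *m XL^T /\
  cosh_mx kappa (dlsubmx D) = XN *m J *m XL^T.
Proof.
by split; apply/matrixP => i j; rewrite lorentz_gramE ?row_usubmx ?row_dsubmx !mxE cosh_dH.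
Qed.

Lemma landmarks_ge : (d.+1 <= l)%N.
Proof. by move: XL_full; rewrite /row_full => /eqP <-; exact: rank_leq_row. Qed.

Let i0 : 'I_l := Ordinal (leq_trans (ltn0Sn d) landmarks_ge).

Lemma Q_orthogonal : Q^T *m Q = 1%:M.
Proof. by case: eigQ => QQt _; exact: mulmx1C. Qed.

Lemma first_eig_gt0 : 0 < lam 0 i0.
Proof.
case: eigQ => _ [eigE [sorted_lam _]]; have [ALE _] := cosh_landmarksE.
have : \sum_k Q i0 k ^+ 2 * lam 0 k = 1.
  move: eigE; rewrite ALE => /matrixP/(_ i0 i0); rewrite lorentz_gramE row_usubmx.
  have [-> _] := X_hyp (lshift m i0); rewrite mul_mx_diag mxE => ->.
  by apply: eq_bigr => k _; rewrite !mxE; ring.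
move=> sum1; rewrite ltNge; apply/negP => lam0.
suff : \sum_k Q i0 k ^+ 2 * lam 0 k <= 0 by rewrite sum1 ler10.
apply: sumr_le0 => k _; rewrite mulr_ge0_le0 ?sqr_ge0 //.
exact: le_trans (sorted_lam i0 k (leq0n k)) lam0.
Qed.

Lemma eig_signature :
  (forall j : 'I_l, (l - d <= j)%N -> lam 0 j < 0) /\
  (forall i : 'I_l, i != i0 -> (i < l - d)%N -> lam 0 i = 0).
Proof.
case: eigQ => QQt [eigE [sorted_lam _]]; have [ALE _] := cosh_landmarksE.
apply: (lorentz_gram_signature (M := Q^T *m XL)) first_eig_gt0 => //.
  rewrite trmx_mul trmxK -!mulmxA (mulmxA XL) (mulmxA _ XL^T) -ALE eigE.
  by rewrite !mulmxA Q_orthogonal mul1mx -mulmxA Q_orthogonal mulmx1.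
rewrite eqmxMfull ?row_full_unit; first exact/eqP.
by rewrite unitmx_tr; case: (mulmx1_unit QQt).
Qed.

Lemma sel_ord0 : sel_ord landmarks_ge 0 = i0.
Proof. exact: val_inj. Qed.

Lemma sgn_eig_gt0 k : 0 < sgn_col R k * mu 0 k.
Proof.
rewrite (sel_mxE landmarks_ge) /sgn_col; case: (eqVneq (val k) 0%N) => [k0|k0].
  by rewrite mul1r (_ : k = 0) ?sel_ord0 ?first_eig_gt0 //; exact: val_inj.
rewrite mulN1r oppr_gt0; apply: eig_signature.1 => /=.
rewrite /sel_idx (negbTE k0).
have k_gt0 : (0 < k)%N by rewrite lt0n.
by have := landmarks_ge; lia.
Qed.

Lemma eig_selected i : lam 0 i != 0 -> exists k, sel_ord landmarks_ge k = i.
Proof.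
move=> nz; have [->|ne] := eqVneq i i0; first by exists 0; exact: sel_ord0.
have [mid|hi] := ltnP i (l - d); first by move: nz; rewrite eig_signature.2 ?eqxx.
have hk : (i - (l - d.+1) < d.+1)%N by have := ltn_ord i; lia.
exists (Ordinal hk); apply/val_inj => /=; rewrite /sel_idx /=.
by case: eqP => h; move: ne; rewrite -val_eqE /=; lia.
Qed.

Definition lhydra_scale : 'rV[R]_d.+1 := \row_k Num.sqrt (sgn_col R k * mu 0 k).
Definition lhydra_iscale : 'rV[R]_d.+1 := \row_k (sgn_col R k / lhydra_scale 0 k).

Definition lhydra_mx : 'M[R]_d.+1 := J *m XL^T *m (Q *m S *m diag_mx lhydra_iscale).

Local Notation s := lhydra_scale.
Local Notation r := lhydra_iscale.
Local Notation T := lhydra_mx.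

Lemma lhydra_scale_gt0 k : 0 < s 0 k.
Proof. by rewrite mxE sqrtr_gt0 sgn_eig_gt0. Qed.

Lemma lhydra_scale_sqr k : s 0 k ^+ 2 = sgn_col R k * mu 0 k.
Proof. by rewrite mxE sqr_sqrtr // ltW ?sgn_eig_gt0. Qed.

Lemma scale_J_scale : diag_mx s *m J *m diag_mx s = diag_mx mu.
Proof.
rewrite Jmx_sgn !mulmx_diag; congr diag_mx; apply/rowP => k.
rewrite [LHS]mxE [in LHS]mxE [X in _ * X * _]mxE mulrAC -expr2 lhydra_scale_sqr.
by rewrite mulrAC sgn_colM mul1r.
Qed.

Lemma eig_iscale : diag_mx mu *m diag_mx r = diag_mx s.
Proof.
rewrite mulmx_diag; congr diag_mx; apply/rowP => k.
rewrite [LHS]mxE [r 0 k]mxE mulrCA mulrA -lhydra_scale_sqr expr2 mulfK //.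
by rewrite gt_eqF ?lhydra_scale_gt0.
Qed.

Lemma LhydraE :
  Lhydra (ulsubmx D) (dlsubmx D) d kappa Q lam =
  Some (col_mx (Q *m S *m diag_mx s) (cosh_mx kappa (dlsubmx D) *m (Q *m S *m diag_mx r))).
Proof.
rewrite /Lhydra ltnNge landmarks_ge /=.
have -> /= : [forall k : 'I_d.+1, (val k != 0%N) ==> (mu 0 k < 0)].
  apply/forallP => k; apply/implyP => k0; have := sgn_eig_gt0 k.
  by rewrite /sgn_col (negbTE k0) mulN1r oppr_gt0.
congr (Some (col_mx _ _)); last congr mulmx.
  by apply/matrixP => i k; rewrite mul_mx_diag !mxE.
by apply/matrixP => i k; rewrite mul_mx_diag !mxE [RHS]mulrCA mulrA.
Qed.

Lemma XL_lhydra_mx : XL *m T = Q *m S *m diag_mx s.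
Proof.
case: eigQ => _ [eigE _]; have [ALE _] := cosh_landmarksE.
rewrite /lhydra_mx !mulmxA -ALE eigE -!mulmxA (mulmxA Q^T) Q_orthogonal mul1mx.
by rewrite (mulmxA (diag_mx lam)) (mul_diag_sel_mx landmarks_ge) -(mulmxA S) eig_iscale.
Qed.

Lemma lhydra_mx_lorentz : T *m J *m T^T = J.
Proof.
case: eigQ => _ [eigE _]; have [ALE _] := cosh_landmarksE.
apply: (row_full_form_inj XL_full).
have -> : XL *m (T *m J *m T^T) *m XL^T = XL *m T *m J *m (XL *m T)^T.
  by rewrite (trmx_mul XL T) !mulmxA.
rewrite -ALE eigE XL_lhydra_mx !trmx_mul tr_diag_mx -!mulmxA (mulmxA (diag_mx s)).
rewrite (mulmxA (diag_mx s *m J)) scale_J_scale (mulmxA S) -(mul_diag_sel_mx landmarks_ge).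
rewrite -(mulmxA (diag_mx lam)) (mulmxA S) (mulmxA (diag_mx lam)).
by rewrite (diag_mx_sel_proj (eig_selected)).
Qed.

Lemma lhydra_mx_positive : positive_lorentz T.
Proof.
apply: (positive_lorentzP lhydra_mx_lorentz (X_hyp (lshift m i0))).
rewrite -row_usubmx -row_mul mxE XL_lhydra_mx mul_mx_diag mxE (sel_mxE landmarks_ge) sel_ord0.
by case: eigQ => _ [_ [_ Q_pos]]; rewrite mulr_gt0 ?Q_pos ?lhydra_scale_gt0.
Qed.

Lemma X_lhydra_mx :
  X *m T = col_mx (Q *m S *m diag_mx s) (cosh_mx kappa (dlsubmx D) *m (Q *m S *m diag_mx r)).
Proof.
have [_ ANE] := cosh_landmarksE.
by rewrite -{1}(vsubmxK X) mul_col_mx XL_lhydra_mx ANE /lhydra_mx !mulmxA.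
Qed.

End LhydraCorrectness.

Theorem theorem1 (R : realType) (d l m : nat) (kappa : R)
    (X : 'M[R]_(l + m, d.+1)) :
  (1 <= d)%N -> 0 < kappa ->
  (forall i, in_hyperboloid (row i X)) ->
  row_full (usubmx X) ->
  forall (Q : 'M[R]_l) (lam : 'rV[R]_l),
    Lhydra_eig kappa (ulsubmx (dist_matrix kappa X)) Q lam ->
    exists Xh : 'M[R]_(l + m, d.+1),
      Lhydra (ulsubmx (dist_matrix kappa X)) (dlsubmx (dist_matrix kappa X))
             d kappa Q lam = Some Xh /\
      (forall i, in_hyperboloid (row i Xh)) /\
      (forall i j, dH kappa (row i Xh) (row j Xh) = dH kappa (row i X) (row j X)) /\
      (exists T : 'M[R]_d.+1, positive_lorentz T /\ Xh = X *m T).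
Proof.
move=> _ kappa_gt0 X_hyp XL_full Q lam eigQ.
have T_pos := lhydra_mx_positive kappa_gt0 X_hyp XL_full eigQ.
have XT := X_lhydra_mx kappa_gt0 X_hyp XL_full eigQ.
exists (X *m lhydra_mx X Q lam); split.
  by rewrite XT; exact: LhydraE.
split=> [i|]; first by rewrite row_mul; exact: positive_lorentz_hyperboloid.
split=> [i j|]; last by exists (lhydra_mx X Q lam).
by case: T_pos => _ [_ [_ T_lorentz]]; rewrite !row_mul /dH lorentz_mulmx.
Qed.
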